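(* Let $H=(V,E)$ be a finite simple graph, let $M$ be a maximum $2$-matching of $H$, let $v_0$ be a singleton of $M$, and let $v_0,v_1,\dots,v_{2i+2}$ be an A-alternating path saving $v_0$. Define $$M'=\bigl(M\setminus\{v_{2j+1}v_{2j+2}: 0\le j\le i\}\bigr)\cup\{v_{2j}v_{2j+1}: 0\le j\le i\}.$$ Then $M'$ is a maximum $2$-matching of $H$, and $M'$ has exactly one fewer singleton than $M$.
   Context: A $2$-matching of $H$ is a set $M\subseteq E$ in which every vertex is incident to at most two edges of $M$. It is maximum if $|M|$ is as large as possible. The components of $(V,M)$ are paths and cycles. A single vertex counts as a $0$-path, and a $k$-path has $k$ edges. A singleton of $M$ is a vertex of degree $0$ in $M$. Given a maximum $2$-matching $M$ and a singleton $v_0$ of $M$, an A-alternating path saving $v_0$ is a sequence of pairwise distinct vertices $v_0,v_1,\dots,v_{2i+2}$, with $i\ge 0$, satisfying: (1) $v_{2j}v_{2j+1}\in E\setminus M$ for every $j=0,\dots,i$; (2) for every $j=1,\dots,i$ there is a component $P_j$ of $(V,M)$ that is a $2$-path, with $v_{2j-1}$ its middle vertex and $v_{2j}$ one of its two endpoints, and $P_1,\dots,P_i$ are pairwise distinct; (3) $v_{2i+1}$ lies on a component $Q$ of $(V,M)$ that is either a cycle or a path with at least $3$ edges, $v_{2i+1}v_{2i+2}\in M$, and if $Q$ is a path then $v_{2i+2}$ is not an endpoint of $Q$. *)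

From mathcomp Require Import all_boot.
Set Implicit Arguments. Unset Strict Implicit. Unset Printing Implicit Defensive.

Section Defs.
Variable T : finType.

(* A finite simple graph H = (T, g): g symmetric and irreflexive. Edges are
   2-element vertex sets. *)
Definition edges (g : rel T) : {set {set T}} :=
  [set [set x; y] | x in T, y in T & g x y].

Definition mdeg (M : {set {set T}}) (v : T) : nat := #|[set e in M | v \in e]|.

Definition two_matching (g : rel T) (M : {set {set T}}) : Prop :=
  M \subset edges g /\ forall v, mdeg M v <= 2.

Definition max_two_matching (g : rel T) (M : {set {set T}}) : Prop :=
  two_matching g M /\ forall M', two_matching g M' -> #|M'| <= #|M|.

Definition singleton (M : {set {set T}}) (v : T) : bool := mdeg M v == 0.

Definition singletons (M : {set {set T}}) : {set T} := [set v | singleton M v].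

Definition madj (M : {set {set T}}) : rel T := fun x y => [set x; y] \in M.

Definition is_comp (M : {set {set T}}) (C : {set T}) : Prop :=
  exists v, C = [set u | connect (madj M) v u].

Definition in_edges (M : {set {set T}}) (C : {set T}) : {set {set T}} :=
  [set e in M | e \subset C].

(* The component C is the path x, s_1, ..., s_k (a k-path with k = size s);
   its endpoints are x and last x s. *)
Definition path_of (M : {set {set T}}) (C : {set T}) (x : T) (s : seq T) : bool :=
  [&& uniq (x :: s), [set u in x :: s] == C &
      in_edges M C == [set [set p.1; p.2] | p in zip (x :: s) s]].

Definition cycle_of (M : {set {set T}}) (C : {set T}) (s : seq T) : bool :=
  [&& uniq s, 3 <= size s, [set u in s] == C &
      in_edges M C == [set [set p.1; p.2] | p in zip s (rot 1 s)]].

Definition A_alt_path (g : rel T) (M : {set {set T}}) (v0 : T) (i : nat)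
    (vs : nat -> T) : Prop :=
  vs 0 = v0 /\
  {in [pred k | k <= 2 * i + 2] &, injective vs} /\
  (forall j, j <= i ->
     [set vs (2 * j); vs (2 * j + 1)] \in edges g :\: M) /\
  (exists P : nat -> {set T},
     (forall j, 1 <= j <= i ->
        is_comp M (P j) /\
        exists x y, path_of M (P j) x [:: vs (2 * j - 1); y] /\
                    (vs (2 * j) = x \/ vs (2 * j) = y)) /\
     (forall j j', 1 <= j <= i -> 1 <= j' <= i -> j <> j' -> P j <> P j')) /\
  (exists Q : {set T},
     is_comp M Q /\ vs (2 * i + 1) \in Q /\
     [set vs (2 * i + 1); vs (2 * i + 2)] \in M /\
     ((exists s, cycle_of M Q s) \/
      (exists x s, path_of M Q x s /\ 3 <= size s)) /\
     (forall x s, path_of M Q x s ->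
        vs (2 * i + 2) <> x /\ vs (2 * i + 2) <> last x s)).

Definition switch (M : {set {set T}}) (i : nat) (vs : nat -> T) : {set {set T}} :=
  (M :\: [set [set vs (2 * j + 1); vs (2 * j + 2)] | j : 'I_i.+1])
  :|: [set [set vs (2 * j); vs (2 * j + 1)] | j : 'I_i.+1].

End Defs.

(* Switching along the path trades the i+1 matching edges v_{2j+1}v_{2j+2} for
   the i+1 non-matching edges v_{2j}v_{2j+1}, so |M'| = |M|.  Each of the two
   edge families is a perfect matching of its index range, so the degree of v
   changes by [v in {v_0..v_{2i+1}}] - [v in {v_1..v_{2i+2}}]: v_0 gains an
   edge, v_{2i+2} loses one and every other vertex keeps its degree.  As v_0
   was a singleton and v_{2i+2} is an inner vertex of a cycle or of a long
   path, hence of degree 2, M' is a 2-matching and v_0 is the only singleton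
   that disappears. *)

From mathcomp Require Import all_boot zify.
Set Implicit Arguments. Unset Strict Implicit. Unset Printing Implicit Defensive.

Lemma card_setDU (X : finType) (M R A : {set X}) :
  R \subset M -> [disjoint A & M] -> #|(M :\: R) :|: A| + #|R| = #|M| + #|A|.
Proof.
move=> RM AM; rewrite cardsU cardsD (setIidPr RM).
have -> : (M :\: R) :&: A = set0.
  apply/setP => e; rewrite !inE; apply/negbTE/negP => /andP[/andP[_ eM] eA].
  by rewrite (disjointFr AM eA) in eM.
by rewrite cards0 subn0; have := subset_leq_card RM; lia.
Qed.

Lemma path_zip (X : Type) (e : rel X) x s :
  path e x s = all (fun p => e p.1 p.2) (zip (x :: s) s).
Proof. by elim: s x => //= y s IHs x; rewrite IHs. Qed.

Lemma cycle_zip (X : Type) (e : rel X) s :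
  cycle e s = all (fun p => e p.1 p.2) (zip s (rot 1 s)).
Proof.
case: s => //= a s; rewrite rot1_cons.
by elim: s {1 3}a => //= b s IHs x; rewrite IHs.
Qed.

Section Graph.
Variable T : finType.
Implicit Types (M N P R A : {set {set T}}) (C : {set T}).

Lemma mdeg_subset M N v : M \subset N -> mdeg M v <= mdeg N v.
Proof.
move=> MN; apply/subset_leq_card/subsetP => e.
by rewrite !inE => /andP[/(subsetP MN) -> ->].
Qed.

Lemma mdeg_setDU M R A v :
  R \subset M -> [disjoint A & M] ->
  mdeg ((M :\: R) :|: A) v + mdeg R v = mdeg M v + mdeg A v.
Proof.
have sub P : [set e in P | v \in e] \subset P.
  by apply/subsetP => e; rewrite inE => /andP[].
move=> RM AM; rewrite /mdeg.
have -> : [set e in (M :\: R) :|: A | v \in e] =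
          ([set e in M | v \in e] :\: [set e in R | v \in e]) :|: [set e in A | v \in e].
  by apply/setP => e; rewrite !inE; case: (v \in e); rewrite ?andbT ?andbF.
apply: card_setDU; last exact: disjointW (sub A) (sub M) AM.
by apply/subsetP => e; rewrite !inE => /andP[/(subsetP RM) -> ->].
Qed.

Lemma madj_sym M : symmetric (madj M).
Proof. by move=> a b; rewrite /madj setUC. Qed.

Lemma mdeg_ge2 M w a b : a != b -> madj M w a -> madj M w b -> 2 <= mdeg M w.
Proof.
rewrite /madj => ab wa wb.
have wa_wb : [set w; a] != [set w; b].
  apply: contra ab => /eqP E; have : a \in [set w; b] by rewrite -E !inE eqxx orbT.
  rewrite !inE => /orP[/eqP aw | //]; have : b \in [set w; a] by rewrite E !inE eqxx orbT.
  by rewrite aw !inE orbb => /eqP ->.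
have <- : #|[set [set w; a]; [set w; b]]| = 2 by rewrite cards2 wa_wb.
apply/subset_leq_card/subsetP => e; rewrite !inE => /orP[]/eqP ->.
  by rewrite wa !inE eqxx.
by rewrite wb !inE eqxx.
Qed.

Lemma madj_in_edges M C (u t : seq T) :
  in_edges M C = [set [set p.1; p.2] | p in zip u t] ->
  all (fun p => madj M p.1 p.2) (zip u t).
Proof.
move=> E; apply/allP => p pz.
have : [set p.1; p.2] \in in_edges M C by rewrite E; apply/imsetP; exists p.
by rewrite inE => /andP[].
Qed.

Lemma path_of_madj M C x s : path_of M C x s -> path (madj M) x s.
Proof. by case/and3P => _ _ /eqP E; rewrite path_zip; apply: madj_in_edges E. Qed.

Lemma cycle_of_madj M C s : cycle_of M C s -> cycle (madj M) s.
Proof. by case/and4P => _ _ _ /eqP E; rewrite cycle_zip; apply: madj_in_edges E. Qed.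

Lemma path_of2_madj M C x m y :
  path_of M C x [:: m; y] -> madj M m x /\ madj M m y.
Proof. by move/path_of_madj => /= /and3P[xm my _]; rewrite madj_sym. Qed.

Lemma mdeg_path_inner M C x s w :
  path_of M C x s -> w \in C -> w != x -> w != last x s -> 2 <= mdeg M w.
Proof.
move=> Ps; have := path_of_madj Ps; case/and3P: Ps => U /eqP <- _.
rewrite inE in_cons => Pe /orP[/eqP-> | ws]; first by rewrite eqxx.
case/splitPr: ws Pe U => p1 [|y p2] Pe U _; first by rewrite last_cat /= eqxx.
move: Pe; rewrite cat_path /= => /and3P[_ pw /andP[wy _]] _.
have wp : madj M w (last x p1) by rewrite madj_sym.
apply: (mdeg_ge2 _ wp wy).
apply: contraTneq U => ly; rewrite -cat_cons cat_uniq.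
suff -> : has [in x :: p1] (w :: y :: p2) by rewrite andbF.
by apply/hasP; exists y; [rewrite !inE eqxx orbT | rewrite /= -ly mem_last].
Qed.

Lemma mdeg_cycle M C s w : cycle_of M C s -> w \in C -> 2 <= mdeg M w.
Proof.
move=> Cs; have := cycle_of_madj Cs; case/and4P: Cs => U s3 /eqP <- _.
rewrite inE => Ce /rot_to[k s' Ek].
have : uniq (w :: s') by rewrite -Ek rot_uniq.
have : cycle (madj M) (w :: s') by rewrite -Ek rot_cycle.
have : 2 <= size s' by move: s3; rewrite -(size_rot k) Ek.
case: s' {Ek} => [|y [|z s']] //= _; rewrite rcons_path.
move=> /and3P[wy _ /andP[_ lw]] /and4P[_ yzs _ _].
have wl : madj M w (last z s') by rewrite madj_sym.
apply: (mdeg_ge2 _ wy wl).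
by apply: contraNneq yzs => ->; apply: mem_last.
Qed.

Lemma is_comp_madj M C x y : is_comp M C -> x \in C -> madj M x y -> y \in C.
Proof. by case=> v ->; rewrite !inE => vx xy; apply: connect_trans vx (connect1 xy). Qed.

End Graph.

Section Pairing.
Variables (T : finType) (f : nat -> T) (n : nat).
Hypothesis f_inj : {in [pred k | k < 2 * n] &, injective f}.

Definition pairing : {set {set T}} := [set [set f (2 * j); f (2 * j + 1)] | j : 'I_n].

Lemma mem_pair_pairing j k :
  j < n -> k < 2 * n -> (f k \in [set f (2 * j); f (2 * j + 1)]) = (k %/ 2 == j).
Proof.
move=> jn kn; have eqf a : a < 2 * n -> f k = f a -> k = a.
  by move=> an; apply: f_inj; rewrite inE.
have [j0n j1n] : 2 * j < 2 * n /\ 2 * j + 1 < 2 * n by lia.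
rewrite !inE; apply/orP/eqP => [[] /eqP/eqf-> // | kj]; try lia.
have [->|->] : k = 2 * j \/ k = 2 * j + 1 by lia.
  by left.
by right.
Qed.

Lemma card_pairing : #|pairing| = n.
Proof.
rewrite card_imset ?card_ord // => j1 j2 E; apply: val_inj => /=.
have j1n : 2 * j1 < 2 * n by have := ltn_ord j1; lia.
by have := mem_pair_pairing (ltn_ord j2) j1n; rewrite -E !inE eqxx => /esym/eqP <-; lia.
Qed.

Lemma mdeg_pairing_in k : k < 2 * n -> mdeg pairing (f k) = 1.
Proof.
move=> kn; have kn2 : k %/ 2 < n by lia.
rewrite /mdeg -(cards1 [set f (2 * Ordinal kn2); f (2 * Ordinal kn2 + 1)]).
apply: eq_card => e; rewrite !inE; apply/andP/eqP => [[/imsetP[j _ ->]] | ->].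
  by rewrite mem_pair_pairing // => /eqP jE; have -> : j = Ordinal kn2 by apply: val_inj.
by split; [apply: imset_f | rewrite mem_pair_pairing].
Qed.

Lemma mdeg_pairing_out v : (forall k, k < 2 * n -> f k != v) -> mdeg pairing v = 0.
Proof.
move=> off; apply: eq_card0 => e; rewrite !inE; apply/andP => -[/imsetP[j _ ->]].
have [off0 off1] : f (2 * j) != v /\ f (2 * j + 1) != v.
  by have := ltn_ord j; split; apply: off; lia.
by rewrite !inE => /orP[]/eqP vE; [move: off0 | move: off1]; rewrite vE eqxx.
Qed.

End Pairing.

Section Switch.
Variables (T : finType) (M : {set {set T}}) (i : nat) (vs : nat -> T).
Hypothesis vs_inj : {in [pred k | k <= 2 * i + 2] &, injective vs}.
Hypothesis added_new : forall j, j <= i -> [set vs (2 * j); vs (2 * j + 1)] \notin M.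
Hypothesis removed_old : forall j, j <= i -> madj M (vs (2 * j + 1)) (vs (2 * j + 2)).

Let added := pairing vs i.+1.
Let removed := pairing (fun k => vs k.+1) i.+1.

Let vs_neq a b : a <= 2 * i + 2 -> b <= 2 * i + 2 -> a != b -> vs a != vs b.
Proof. by move=> ai bi; apply: contra_neq => E; apply: (vs_inj _ _ E); rewrite inE. Qed.

Let added_inj : {in [pred k | k < 2 * i.+1] &, injective vs}.
Proof. by move=> a b; rewrite !inE => ai bi; apply: vs_inj; rewrite inE; lia. Qed.

Let removed_inj : {in [pred k | k < 2 * i.+1] &, injective (fun k => vs k.+1)}.
Proof.
move=> a b; rewrite !inE => ai bi /= E; suff : a.+1 = b.+1 by case.
by apply: (vs_inj _ _ E); rewrite inE; lia.
Qed.

Lemma switchE : switch M i vs = (M :\: removed) :|: added.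
Proof.
by congr (_ :\: _ :|: _); apply: eq_imset => j /=; rewrite addn1 addn2.
Qed.

Let removed_sub : removed \subset M.
Proof.
apply/subsetP => _ /imsetP[j _ ->] /=; have := removed_old (ltn_ord j).
by rewrite /madj addn1 addn2.
Qed.

Let added_disj : [disjoint added & M].
Proof.
rewrite disjoint_subset; apply/subsetP => _ /imsetP[j _ ->].
exact: added_new (ltn_ord j).
Qed.

Lemma card_switch : #|switch M i vs| = #|M|.
Proof.
have := card_setDU removed_sub added_disj.
by rewrite -switchE !card_pairing // => /addIn.
Qed.

Let mdeg_switchE v : mdeg (switch M i vs) v + mdeg removed v = mdeg M v + mdeg added v.
Proof. by rewrite switchE; apply: mdeg_setDU. Qed.

Let mdeg_added k : k <= 2 * i + 1 -> mdeg added (vs k) = 1.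
Proof. by move=> ki; apply: mdeg_pairing_in => //; lia. Qed.

Let mdeg_removed k : 0 < k <= 2 * i + 2 -> mdeg removed (vs k) = 1.
Proof.
move=> ki; have -> : vs k = (fun k => vs k.+1) k.-1 by rewrite /= prednK //; lia.
by apply: mdeg_pairing_in => //; lia.
Qed.

Lemma mdeg_switch_off v :
  (forall k, k <= 2 * i + 2 -> vs k != v) -> mdeg (switch M i vs) v = mdeg M v.
Proof.
move=> off; have := mdeg_switchE v.
rewrite !mdeg_pairing_out ?addn0 // => k ki; apply: off; lia.
Qed.

Lemma mdeg_switch_start : mdeg (switch M i vs) (vs 0) = (mdeg M (vs 0)).+1.
Proof.
have := mdeg_switchE (vs 0); rewrite mdeg_added // mdeg_pairing_out ?addn0 ?addn1 //.
by move=> k ki; apply: vs_neq; lia.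
Qed.

Lemma mdeg_switch_inner k :
  0 < k <= 2 * i + 1 -> mdeg (switch M i vs) (vs k) = mdeg M (vs k).
Proof.
move=> /andP[k0 ki]; have := mdeg_switchE (vs k).
by rewrite mdeg_added ?mdeg_removed ?k0 //= => [/addIn|]; lia.
Qed.

Lemma mdeg_switch_end :
  (mdeg (switch M i vs) (vs (2 * i + 2))).+1 = mdeg M (vs (2 * i + 2)).
Proof.
have := mdeg_switchE (vs (2 * i + 2)).
rewrite mdeg_removed ?mdeg_pairing_out ?addn0 ?addn1 //.
  by move=> k ki; apply: vs_neq; lia.
lia.
Qed.

Lemma mdeg_alt_pos k : 0 < k <= 2 * i + 2 -> 0 < mdeg M (vs k).
Proof. by move=> ki; rewrite -(mdeg_removed ki) mdeg_subset. Qed.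

Lemma alt_vertexP v :
  (exists2 k, k <= 2 * i + 2 & vs k = v) \/ (forall k, k <= 2 * i + 2 -> vs k != v).
Proof.
case: (boolP [exists k : 'I_(2 * i + 3), vs k == v]).
  by case/existsP => k /eqP <-; left; exists k => //; have := ltn_ord k; lia.
move/existsPn => off.
by right=> k ki; apply: (off (Ordinal (_ : k < 2 * i + 3))); lia.
Qed.

Lemma mdeg_switch_le2 :
  (forall v, mdeg M v <= 2) -> mdeg M (vs 0) = 0 -> forall v, mdeg (switch M i vs) v <= 2.
Proof.
move=> Mdeg start0 v; case: (alt_vertexP v) => [[k ki <-] | off].
  have [-> | k0] := posnP k; first by rewrite mdeg_switch_start start0.
  have [kin | kend] := leqP k (2 * i + 1); first by rewrite mdeg_switch_inner ?k0.
  have -> : k = 2 * i + 2 by lia.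
  by have := Mdeg (vs (2 * i + 2)); rewrite -mdeg_switch_end; lia.
by rewrite mdeg_switch_off.
Qed.

Lemma singletons_switch :
  mdeg M (vs 0) = 0 -> 2 <= mdeg M (vs (2 * i + 2)) ->
  singletons (switch M i vs) = singletons M :\ vs 0.
Proof.
move=> start0 end2; apply/setP => v; rewrite !inE /singleton.
case: (alt_vertexP v) => [[k ki <-] | off].
  2: by rewrite mdeg_switch_off // [v == _]eq_sym off.
have [-> | k0] := posnP k; first by rewrite mdeg_switch_start eqxx.
have [kin | kend] := leqP k (2 * i + 1).
  have : 0 < mdeg M (vs k) by apply: mdeg_alt_pos; rewrite k0.
  by rewrite mdeg_switch_inner ?k0 //; case: (mdeg M (vs k)) => // d _; rewrite andbF.
have -> : k = 2 * i + 2 by lia.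
move: end2; rewrite -mdeg_switch_end.
by case: (mdeg (switch M i vs) _) => // d _; rewrite andbF.
Qed.

End Switch.

Lemma A_alt_path_removed (T : finType) (g : rel T) (M : {set {set T}}) v0 i vs :
  A_alt_path g M v0 i vs ->
  forall j, j <= i -> madj M (vs (2 * j + 1)) (vs (2 * j + 2)).
Proof.
case=> _ [_ [_ [[P [Ppaths _]] [Q [_ [_ [lastM _]]]]]]] j ji.
have [ji' | -> //] : j < i \/ j = i by lia.
have jP : 1 <= j.+1 <= i by lia.
have [_ [x [y [Pj Ej]]]] := Ppaths j.+1 jP; have [mx my] := path_of2_madj Pj.
have -> : 2 * j + 1 = 2 * j.+1 - 1 by lia.
have -> : 2 * j + 2 = 2 * j.+1 by lia.
by case: Ej => ->.
Qed.

Lemma A_alt_path_end_deg (T : finType) (g : rel T) (M : {set {set T}}) v0 i vs :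
  A_alt_path g M v0 i vs -> 2 <= mdeg M (vs (2 * i + 2)).
Proof.
case=> _ [_ [_ [_ [Q [Qcomp [Q1 [lastM [Qshape Qends]]]]]]]].
have Q2 := is_comp_madj Qcomp Q1 lastM.
case: Qshape => [[s Qs] | [x [s [Qs _]]]]; first exact: mdeg_cycle Qs Q2.
by have [nx nl] := Qends x s Qs; apply: mdeg_path_inner Qs Q2 _ _; apply/eqP.
Qed.

Theorem mainTheorem2 (T : finType) (g : rel T) (M : {set {set T}}) (v0 : T)
    (i : nat) (vs : nat -> T) :
  symmetric g -> irreflexive g ->
  max_two_matching g M -> singleton M v0 -> A_alt_path g M v0 i vs ->
  max_two_matching g (switch M i vs) /\
  #|singletons (switch M i vs)| + 1 = #|singletons M|.
Proof.
move=> _ _ [[Msub Mdeg] Mmax] sv0 alt.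
have removed_old := A_alt_path_removed alt.
have end2 := A_alt_path_end_deg alt.
case: alt => vs0 [vs_inj [added_edges _]].
have added_new j : j <= i -> [set vs (2 * j); vs (2 * j + 1)] \notin M.
  by move/added_edges; rewrite inE => /andP[].
have start0 : mdeg M (vs 0) = 0 by rewrite vs0; apply/eqP.
split; first split; first split.
- apply/subsetP => e; rewrite !inE => /orP[/andP[_ /(subsetP Msub)] // | /imsetP[j _ ->]].
  by have := added_edges _ (ltn_ord j); rewrite inE => /andP[].
- exact: mdeg_switch_le2 vs_inj added_new removed_old Mdeg start0.
- by move=> M' /Mmax; rewrite (card_switch vs_inj added_new removed_old).
rewrite (singletons_switch vs_inj added_new removed_old start0 end2).
by rewrite (cardsD1 (vs 0) (singletons M)) inE /singleton start0 addnC.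
Qed.
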